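(* Let $N\ge3$ and $\alpha>-2$. There exists a constant $C_{N,\alpha}>0$ depending only on $N$ and $\alpha$ such that for every $\beta\le\beta_0$, $$u_\beta(r)\le-(4+\alpha)\ln r+C_{N,\alpha}\quad\text{for all }r>0.$$
   Context: Fix an integer $N\ge3$ and $\alpha>-2$. For $\beta\in\mathbb{R}$, $u_\beta$ denotes the radial function $u_\beta(x)=u_\beta(r)$, $r=|x|$, solving the initial value problem $\Delta^2u=|x|^\alpha e^u$ for $r\in[0,R_\beta)$, $u'(0)=u'''(0)=0$, $u(0)=0$, $\Delta u(0)=\beta$, where $\Delta u=u''+\frac{N-1}{r}u'$ is the radial Laplacian in $\mathbb{R}^N$ and $[0,R_\beta)$ is the maximal interval of existence. $u_\beta$ is called an entire solution if $R_\beta=\infty$. $\beta_0:=\sup\{\beta\in\mathbb{R}:R_\beta=\infty\}$; it is known that $\beta_0$ is a finite negative number and that $R_\beta=\infty$ if and only if $\beta\le\beta_0$. *)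

From Stdlib Require Import Reals.
From Coquelicot Require Import Coquelicot.
Open Scope R_scope.

Definition rlap (N : nat) (f : R -> R) (r : R) : R :=
  Derive_n f 2 r + (INR N - 1) / r * Derive f r.

(* u : [0,oo) -> R is an entire (R_beta = +oo) radial solution of
   Delta^2 u = |x|^alpha e^u with u(0)=0, u'(0)=0, Delta u(0)=beta and the
   regularity condition replacing u'''(0)=0. *)
Definition entire_radial_solution (N : nat) (alpha beta : R) (u : R -> R) : Prop :=
  (forall r, 0 < r -> forall k, (k <= 3)%nat -> ex_derive (Derive_n u k) r) /\
  (forall r, 0 < r ->
     Derive_n (rlap N u) 2 r + (INR N - 1) / r * Derive (rlap N u) r
     = Rpower r alpha * exp (u r)) /\
  u 0 = 0 /\
  filterlim u (at_right 0) (locally 0) /\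
  filterlim (Derive u) (at_right 0) (locally 0) /\
  filterlim (rlap N u) (at_right 0) (locally beta) /\
  filterlim (fun r => r ^ (N - 1) * Derive (rlap N u) r) (at_right 0) (locally 0).

Definition beta0 (N : nat) (alpha : R) : Rbar :=
  Lub_Rbar (fun beta => exists u, entire_radial_solution N alpha beta u).

(* Write v = Delta u (radial Laplacian) and F(r) = r^(N-1) v'(r).  The equation
   reads F'(r) = r^(N-1+alpha) e^(u(r)) >= 0 and F(0+) = 0, so F >= 0 and v is
   nondecreasing; since (r^(N-1) u')' = r^(N-1) v and r^(N-1) u' -> 0 at 0,
   this gives u'(r) <= r v(r) / N.

   1. v <= 0 everywhere.  Otherwise v and u' are nonnegative beyond some Rs, and
      integrating the equation four times on [T, 3T] (Rs <= T) yields the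
      self-improving growth u(b) >= u(s) + c_T e^(u(s)) (b - s)^4.  Iterating it
      along the radii 3T - 2T 2^(-k) forces u(3T) = +oo as soon as
      c_T T^4 e^(u(T)) >= 4, which holds for T large.
   2. Hence u is nonincreasing, F(r) >= e^(u(r)) r^(N+alpha) / (N+alpha), and
      comparing v(r) with v(2r) <= 0 gives u'(r) <= -(4+alpha) K e^(u(r)) r^(3+alpha)
      for an explicit K = K_(N,alpha) > 0.
   3. Then e^(-u) - K r^(4+alpha) is nondecreasing with limit 1 at 0+, so
      u(r) <= -(4+alpha) ln r - ln K. *)

From Stdlib Require Import Reals Lra Lia.
From Coquelicot Require Import Coquelicot.
Open Scope R_scope.

Lemma exp_le_compat (x y : R) : x <= y -> exp x <= exp y.
Proof. intros [h|h]; [left; apply exp_increasing, h | subst; lra]. Qed.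

Lemma ln_le_compat (x y : R) : 0 < x -> x <= y -> ln x <= ln y.
Proof. intros hx [h|h]; [left; apply ln_increasing; lra | subst; lra]. Qed.

Lemma is_derive_value_eq (f : R -> R) (x l l' : R) :
  is_derive f x l -> l = l' -> is_derive f x l'.
Proof. intros H <-. exact H. Qed.

Lemma increment_le_of_deriv_le (f g df dg : R -> R) (a b : R) : a <= b ->
  (forall x, a <= x <= b -> is_derive f x (df x)) ->
  (forall x, a <= x <= b -> is_derive g x (dg x)) ->
  (forall x, a <= x <= b -> dg x <= df x) -> g b - g a <= f b - f a.
Proof.
intros hab Hf Hg Hle.
assert (D : forall x, a <= x <= b -> is_derive (fun x => f x - g x) x (df x - dg x)).
{ intros x Hx. exact (is_derive_minus f g x (df x) (dg x) (Hf x Hx) (Hg x Hx)). }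
destruct (MVT_gen (fun x => f x - g x) a b (fun x => df x - dg x)) as [c [Hc E]].
- intros x Hx. rewrite Rmin_left, Rmax_right in Hx by lra. apply D; lra.
- intros x Hx. rewrite Rmin_left, Rmax_right in Hx by lra.
  apply continuity_pt_filterlim, (ex_derive_continuous (fun x => f x - g x)).
  eexists. apply D; lra.
- rewrite Rmin_left, Rmax_right in Hc by lra. simpl in E.
  pose proof (Hle c Hc).
  assert (0 <= (df c - dg c) * (b - a)) by (apply Rmult_le_pos; lra). lra.
Qed.

Lemma nondecreasing_of_deriv_nonneg (f df : R -> R) (a b : R) : a <= b ->
  (forall x, a <= x <= b -> is_derive f x (df x)) ->
  (forall x, a <= x <= b -> 0 <= df x) -> f a <= f b.
Proof.
intros hab Hf Hd.
pose proof (increment_le_of_deriv_le f (fun _ => 0) df (fun _ => 0) a b hab Hf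
  (fun x _ => is_derive_const 0 x) Hd). lra.
Qed.

Lemma nonincreasing_of_deriv_nonpos (f df : R -> R) (a b : R) : a <= b ->
  (forall x, a <= x <= b -> is_derive f x (df x)) ->
  (forall x, a <= x <= b -> df x <= 0) -> f b <= f a.
Proof.
intros hab Hf Hd.
pose proof (increment_le_of_deriv_le (fun _ => 0) f (fun _ => 0) df a b hab
  (fun x _ => is_derive_const 0 x) Hf Hd). lra.
Qed.

Lemma increment_ge_of_deriv_ge (f df : R -> R) (k : R) (n : nat) (a b : R) :
  a <= b ->
  (forall x, a <= x <= b -> is_derive f x (df x)) ->
  (forall x, a <= x <= b -> k * (x - a)^n <= df x) ->
  f a + k * (b - a)^(S n) / INR (S n) <= f b.
Proof.
intros hab Hf Hk.
assert (hn : 0 < INR (S n)) by (apply lt_0_INR; lia).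
set (g := fun x => k / INR (S n) * (x - a)^(S n)).
assert (Hg : forall x, a <= x <= b -> is_derive g x (k * (x - a)^n)).
{ intros x _. unfold g.
  assert (Hlin : is_derive (fun t => t - a) x 1).
  { replace 1 with (1 - 0) by ring.
    apply (is_derive_minus (fun t => t) (fun _ => a));
      [exact (is_derive_id x) | exact (is_derive_const a x)]. }
  pose proof (is_derive_scal _ x (k / INR (S n)) _ (is_derive_pow _ (S n) x 1 Hlin)) as H.
  replace (k * (x - a)^n) with (k / INR (S n) * (INR (S n) * 1 * (x - a)^Init.Nat.pred (S n)))
    by (simpl Init.Nat.pred; field; lra).
  exact H. }
pose proof (increment_le_of_deriv_le f g df (fun x => k * (x - a)^n) a b hab Hf Hg Hk) as C.
unfold g in C. replace ((a - a)^(S n)) with 0 in C by (simpl; ring).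
replace (k * (b - a)^(S n) / INR (S n)) with (k / INR (S n) * (b - a)^(S n)) by (field; lra).
lra.
Qed.

Lemma le_div_of_weighted (c h w W : R) :
  0 < w -> w <= W -> 0 <= c -> c <= w * h -> c / W <= h.
Proof.
intros hw hwW hc hch.
apply Rle_trans with (c / w).
- unfold Rdiv. apply Rmult_le_compat_l; [exact hc|]. apply Rinv_le_contravar; lra.
- apply (Rmult_le_reg_l w); [exact hw|]. unfold Rdiv.
  rewrite <- Rmult_assoc, (Rmult_comm w c), Rmult_assoc, Rinv_r, Rmult_1_r; lra.
Qed.

Lemma limit_le_of_nondecreasing (F : R -> R) (L r : R) : 0 < r ->
  (forall s, 0 < s < r -> F s <= F r) ->
  filterlim F (at_right 0) (locally L) -> L <= F r.
Proof.
intros hr HF HL.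
assert (near : at_right 0 (fun s => F s <= F r)).
{ exists (mkposreal r hr). intros s Hs hs. apply HF. split; [exact hs|].
  apply Rabs_def2 in Hs. unfold minus, plus, opp in Hs; simpl in Hs. lra. }
exact (filterlim_le (F := at_right 0) F (fun _ => F r) L (F r) near HL (filterlim_const _)).
Qed.

Lemma limit_ge_of_nonincreasing (F : R -> R) (L r : R) : 0 < r ->
  (forall s, 0 < s < r -> F r <= F s) ->
  filterlim F (at_right 0) (locally L) -> F r <= L.
Proof.
intros hr HF HL.
assert (near : at_right 0 (fun s => F r <= F s)).
{ exists (mkposreal r hr). intros s Hs hs. apply HF. split; [exact hs|].
  apply Rabs_def2 in Hs. unfold minus, plus, opp in Hs; simpl in Hs. lra. }
exact (filterlim_le (F := at_right 0) (fun _ => F r) F (F r) L near (filterlim_const _) HL).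
Qed.

Lemma filterlim_plus_fun {T : Type} (F : (T -> Prop) -> Prop) {FF : Filter F}
  (f g : T -> R) (a b : R) :
  filterlim f F (locally a) -> filterlim g F (locally b) ->
  filterlim (fun x => f x + g x) F (locally (a + b)).
Proof.
intros Hf Hg. eapply filterlim_comp_2; [exact Hf | exact Hg | apply (filterlim_plus a b)].
Qed.

Lemma filterlim_mult_fun {T : Type} (F : (T -> Prop) -> Prop) {FF : Filter F}
  (f g : T -> R) (a b : R) :
  filterlim f F (locally a) -> filterlim g F (locally b) ->
  filterlim (fun x => f x * g x) F (locally (a * b)).
Proof.
intros Hf Hg. eapply filterlim_comp_2; [exact Hf | exact Hg | apply (filterlim_mult a b)].
Qed.

Lemma filterlim_Rpower_0 (y : R) : 0 < y ->
  filterlim (fun x => Rpower x y) (at_right 0) (locally 0).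
Proof.
intros hy. unfold Rpower.
eapply filterlim_comp; [|exact is_lim_exp_m].
eapply filterlim_comp; [exact is_lim_ln_0|].
pose proof (filterlim_Rbar_mult_l y m_infty) as H. simpl in H. unfold Rbar_mult' in H.
destruct (Rle_dec 0 y) as [h|h]; [|lra].
destruct (Rle_lt_or_eq_dec 0 y h); [exact H | lra].
Qed.

Lemma filterlim_pow_0 (n : nat) : (1 <= n)%nat ->
  filterlim (fun x => x ^ n) (at_right 0) (locally 0).
Proof.
intros hn. apply (filterlim_ext_loc (fun x => Rpower x (INR n))).
- exists (mkposreal 1 Rlt_0_1). intros x _ hx. apply Rpower_pow, hx.
- apply filterlim_Rpower_0, lt_0_INR. lia.
Qed.

Lemma Rpower_lower_bound (alpha T t : R) : 0 < T -> T <= t <= 3 * T ->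
  Rpower T alpha * Rmin 1 (Rpower 3 alpha) <= Rpower t alpha.
Proof.
intros hT ht.
assert (hq : 0 < t / T) by (apply Rdiv_lt_0_compat; lra).
replace (Rpower t alpha) with (Rpower (T * (t / T)) alpha) by (f_equal; field; lra).
rewrite <- Rpower_mult_distr by lra.
apply Rmult_le_compat_l; [left; apply exp_pos|].
assert (h1 : 1 <= t / T)
  by (apply (Rmult_le_reg_r T); [lra|]; unfold Rdiv; rewrite Rmult_assoc, Rinv_l; lra).
assert (h2 : t / T <= 3)
  by (apply (Rmult_le_reg_r T); [lra|]; unfold Rdiv; rewrite Rmult_assoc, Rinv_l; lra).
assert (l1 : 0 <= ln (t / T)) by (rewrite <- ln_1; apply ln_le_compat; lra).
assert (l2 : ln (t / T) <= ln 3) by (apply ln_le_compat; lra).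
unfold Rpower. destruct (Rle_lt_dec 0 alpha).
- apply Rle_trans with 1; [apply Rmin_l|]. rewrite <- exp_0. apply exp_le_compat. nra.
- apply Rle_trans with (exp (alpha * ln 3)); [apply Rmin_r|]. apply exp_le_compat. nra.
Qed.

Lemma exp_4_ge_16 : 16 <= exp 4.
Proof.
assert (h1 : 2 <= exp 1) by (pose proof (exp_ineq1_le 1); lra).
replace 4 with (1 + 1 + 1 + 1) by ring. rewrite !exp_plus.
assert (h2 : 4 <= exp 1 * exp 1) by nra. nra.
Qed.

Lemma half_pow_bounds (k : nat) : 0 < (/2)^k <= 1.
Proof.
split; [apply pow_lt; lra|].
rewrite <- (pow1 k). apply pow_incr. lra.
Qed.

(* Quartic self-growth on [T, 3T]: if f(b) >= f(s) + c e^(f s) (b - s)^4 for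
   T <= s <= b <= 3T and c T^4 e^(f T) >= 4, then along the radii
   r_k = 3T - 2T 2^(-k) each step raises f by at least 4, hence e^f by 16. *)
Lemma quartic_growth_iterate (f : R -> R) (c T : R) : 0 < T -> 0 < c ->
  (forall s b, T <= s -> s <= b -> b <= 3 * T -> f s + c * exp (f s) * (b - s)^4 <= f b) ->
  4 <= c * T^4 * exp (f T) ->
  forall k, 16^k * exp (f T) <= exp (f (3 * T - 2 * T * (/2)^k)).
Proof.
intros hT hc Hgrow Hstart k.
induction k as [|k IH].
- replace (3 * T - 2 * T * (/2)^0) with T by (simpl; ring). lra.
- set (r := 3 * T - 2 * T * (/2)^k) in IH.
  pose proof (half_pow_bounds k) as hhalf.
  assert (hnext : 3 * T - 2 * T * (/2)^(S k) = r + T * (/2)^k) by (unfold r; simpl; field).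
  rewrite hnext.
  assert (Hstep : f r + c * exp (f r) * (T * (/2)^k)^4 <= f (r + T * (/2)^k)).
  { pose proof (Hgrow r (r + T * (/2)^k)
      ltac:(unfold r; nra) ltac:(nra) ltac:(unfold r; nra)) as H.
    replace (r + T * (/2)^k - r) with (T * (/2)^k) in H by ring. exact H. }
  assert (Hscale : 16^k * (T * (/2)^k)^4 = T^4).
  { rewrite Rpow_mult_distr, <- pow_mult, Nat.mul_comm, pow_mult.
    replace (16^k * (T^4 * ((/2)^4)^k)) with (T^4 * (16 * (/2)^4)^k)
      by (rewrite Rpow_mult_distr; ring).
    replace (16 * (/2)^4) with 1 by field. rewrite pow1. ring. }
  assert (Hgain : 4 <= c * exp (f r) * (T * (/2)^k)^4).
  { apply Rle_trans with (c * (16^k * exp (f T)) * (T * (/2)^k)^4).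
    - replace (c * (16^k * exp (f T)) * (T * (/2)^k)^4)
        with (c * exp (f T) * (16^k * (T * (/2)^k)^4)) by ring.
      rewrite Hscale. lra.
    - apply Rmult_le_compat_r; [apply pow_le; nra|].
      apply Rmult_le_compat_l; lra. }
  apply Rle_trans with (exp (f r) * exp 4).
  + pose proof exp_4_ge_16. pose proof (pow_le 16 k ltac:(lra)).
    pose proof (exp_pos (f T)).
    replace (16^(S k) * exp (f T)) with (16^k * exp (f T) * 16) by (simpl; ring).
    apply Rmult_le_compat; nra.
  + rewrite <- exp_plus. apply exp_le_compat. lra.
Qed.

Lemma quartic_growth_blowup (f : R -> R) (c T : R) : 0 < T -> 0 < c ->
  (forall s b, T <= s -> s <= b -> b <= 3 * T -> f s + c * exp (f s) * (b - s)^4 <= f b) ->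
  4 <= c * T^4 * exp (f T) -> False.
Proof.
intros hT hc Hgrow Hstart.
assert (Hbound : forall k, 16^k * exp (f T) <= exp (f (3 * T))).
{ intros k. apply Rle_trans with (exp (f (3 * T - 2 * T * (/2)^k))).
  - exact (quartic_growth_iterate f c T hT hc Hgrow Hstart k).
  - apply exp_le_compat.
    pose proof (half_pow_bounds k) as hhalf.
    set (s := 3 * T - 2 * T * (/2)^k).
    pose proof (Hgrow s (3 * T) ltac:(unfold s; nra) ltac:(unfold s; nra) ltac:(lra)).
    assert (0 <= c * exp (f s) * (3 * T - s)^4).
    { apply Rmult_le_pos; [pose proof (exp_pos (f s)); nra | apply pow_le; unfold s; nra]. }
    lra. }
pose proof (exp_pos (f T)) as hE.
destruct (Pow_x_infinity 16 ltac:(rewrite Rabs_pos_eq; lra) (exp (f (3 * T)) / exp (f T) + 1))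
  as [k Hk].
specialize (Hk k (Nat.le_refl k)). rewrite Rabs_pos_eq in Hk by (apply pow_le; lra).
specialize (Hbound k).
assert (exp (f (3 * T)) / exp (f T) * exp (f T) = exp (f (3 * T))) by (field; lra).
nra.
Qed.

Lemma is_derive_radial_flux (N : nat) (g : R -> R) (x dg : R) :
  (1 <= N)%nat -> 0 < x -> is_derive g x dg ->
  is_derive (fun t => t^(N-1) * g t) x (x^(N-1) * (dg + (INR N - 1) / x * g x)).
Proof.
intros hN hx Hg.
pose proof (is_derive_mult (fun t => t^(N-1)) g x _ dg
  (is_derive_pow (fun t => t) (N-1) x 1 (is_derive_id x)) Hg Rmult_comm) as H.
eapply is_derive_value_eq; [exact H|]. unfold plus, mult; simpl.
destruct N as [|[|m]]; [lia | simpl; field; lra|].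
replace (S (S m) - 1)%nat with (S m) by lia. rewrite (S_INR (S m)).
simpl Init.Nat.pred. simpl pow. field. lra.
Qed.

Lemma Rpower_split (N : nat) (alpha x : R) : (1 <= N)%nat -> 0 < x ->
  Rpower x (INR N + alpha - 1) = x^(N-1) * Rpower x alpha.
Proof.
intros hN hx. rewrite <- Rpower_pow, <- Rpower_plus by exact hx.
f_equal. rewrite minus_INR by lia. simpl. ring.
Qed.

Lemma Rpower_shift (N : nat) (alpha x : R) : (1 <= N)%nat -> 0 < x ->
  Rpower x (INR N + alpha) * x^2 = Rpower x (3 + alpha) * x^(N-1).
Proof.
intros hN hx. rewrite <- !Rpower_pow, <- !Rpower_plus by exact hx.
f_equal. rewrite minus_INR by lia. simpl. ring.
Qed.

(* The constant K_(N,alpha) of the decay estimate  e^(-u(r)) >= K r^(4+alpha). *)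
Definition decay_const (N : nat) (alpha : R) : R :=
  / (INR N * (INR N + alpha) * 2^(N-1) * (4 + alpha)).

Lemma decay_const_pos (N : nat) (alpha : R) :
  (3 <= N)%nat -> -2 < alpha -> 0 < decay_const N alpha.
Proof.
intros hN ha.
assert (h3 : 3 <= INR N) by (replace 3 with (INR 3) by (simpl; ring); apply le_INR; lia).
pose proof (pow_lt 2 (N-1) ltac:(lra)).
unfold decay_const. apply Rinv_0_lt_compat.
repeat apply Rmult_lt_0_compat; lra.
Qed.

(* The rate in the quartic growth of u on [T, 3T] is T^alpha times this constant. *)
Definition growth_const (N : nat) (alpha : R) : R :=
  Rmin 1 (Rpower 3 alpha) / (24 * (3^(N-1))^2).

Lemma growth_const_pos (N : nat) (alpha : R) : 0 < growth_const N alpha.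
Proof.
assert (hmin : 0 < Rmin 1 (Rpower 3 alpha)) by (apply Rmin_pos; [lra | apply exp_pos]).
unfold growth_const. pose proof (pow_lt 3 (N-1) ltac:(lra)). apply Rdiv_lt_0_compat; nra.
Qed.

Section EntireSolution.

Variables (N : nat) (alpha beta : R) (u : R -> R).
Hypothesis hN : (3 <= N)%nat.
Hypothesis ha : -2 < alpha.
Hypothesis Hu : entire_radial_solution N alpha beta u.

Local Notation v := (rlap N u).

Lemma is_derive_iter (k : nat) (x : R) : 0 < x -> (k <= 3)%nat ->
  is_derive (Derive_n u k) x (Derive_n u (S k) x).
Proof. intros hx hk. apply Derive_correct. exact (proj1 Hu x hx k hk). Qed.

Lemma is_derive_u (x : R) : 0 < x -> is_derive u x (Derive u x).
Proof. intros hx. exact (is_derive_iter 0 x hx ltac:(lia)). Qed.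

Lemma is_derive_lap_formula (x : R) : 0 < x ->
  is_derive v x (Derive_n u 3 x + (INR N - 1) * (- / x^2 * Derive u x + / x * Derive_n u 2 x)).
Proof.
intros hx. unfold rlap.
pose proof (is_derive_inv (fun t => t) x 1 (is_derive_id x) ltac:(lra)) as Hinv.
pose proof (is_derive_mult _ _ x _ _ (is_derive_scal _ x (INR N - 1) _ Hinv)
  (is_derive_iter 1 x hx ltac:(lia)) Rmult_comm) as Hmul.
pose proof (is_derive_plus _ _ x _ _ (is_derive_iter 2 x hx ltac:(lia)) Hmul) as H.
eapply is_derive_value_eq; [exact H|].
change (Derive_n u 1 x) with (Derive u x). unfold plus, mult. cbn -[Derive_n Derive].
field. lra.
Qed.

Lemma is_derive_lap (x : R) : 0 < x -> is_derive v x (Derive v x).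
Proof.
intros hx. pose proof (is_derive_lap_formula x hx) as H.
rewrite (is_derive_unique _ _ _ H). exact H.
Qed.

(* v is twice differentiable, since v' is given by the formula above near x. *)
Lemma is_derive_Dlap (x : R) : 0 < x -> is_derive (Derive v) x (Derive (Derive v) x).
Proof.
intros hx. apply Derive_correct.
set (w := fun t => Derive_n u 3 t + (INR N - 1) * (- / t^2 * Derive u t + / t * Derive_n u 2 t)).
apply (ex_derive_ext_loc w).
- exists (mkposreal x hx). intros t Ht.
  assert (ht : 0 < t) by (apply Rabs_def2 in Ht; unfold minus, plus, opp in Ht; simpl in Ht; lra).
  symmetry. exact (is_derive_unique _ _ _ (is_derive_lap_formula t ht)).
- destruct Hu as (Hreg & _). unfold w. auto_derive.
  refine (conj (Hreg x hx 3%nat ltac:(lia)) (conj _ (conj (Hreg x hx 1%nat ltac:(lia))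
    (conj _ (conj (Hreg x hx 2%nat ltac:(lia)) I))))); nra.
Qed.

Lemma is_derive_grad_flux (x : R) : 0 < x ->
  is_derive (fun t => t^(N-1) * Derive u t) x (x^(N-1) * v x).
Proof.
intros hx.
exact (is_derive_radial_flux N (Derive u) x _ ltac:(lia) hx (is_derive_iter 1 x hx ltac:(lia))).
Qed.

Lemma is_derive_lap_flux (x : R) : 0 < x ->
  is_derive (fun t => t^(N-1) * Derive v t) x (x^(N-1) * (Rpower x alpha * exp (u x))).
Proof.
intros hx. destruct Hu as (_ & Heq & _). rewrite <- (Heq x hx).
exact (is_derive_radial_flux N (Derive v) x _ ltac:(lia) hx (is_derive_Dlap x hx)).
Qed.

Lemma lap_flux_nondecreasing (a b : R) : 0 < a -> a <= b ->
  a^(N-1) * Derive v a <= b^(N-1) * Derive v b.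
Proof.
intros ha0 hab.
apply (nondecreasing_of_deriv_nonneg (fun t => t^(N-1) * Derive v t)
  (fun x => x^(N-1) * (Rpower x alpha * exp (u x)))); [lra| |].
- intros x hx. apply is_derive_lap_flux. lra.
- intros x hx. pose proof (pow_lt x (N-1) ltac:(lra)). pose proof (exp_pos (alpha * ln x)).
  pose proof (exp_pos (u x)). unfold Rpower. apply Rmult_le_pos; [lra|]. nra.
Qed.

Lemma lap_flux_nonneg (r : R) : 0 < r -> 0 <= r^(N-1) * Derive v r.
Proof.
intros hr. destruct Hu as (_ & _ & _ & _ & _ & _ & Hflux0).
apply (limit_le_of_nondecreasing (fun t => t^(N-1) * Derive v t)); [exact hr| |exact Hflux0].
intros s hs. apply lap_flux_nondecreasing; lra.
Qed.

(* v' = F / r^(N-1) >= 0. *)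
Lemma lap_nondecreasing (a b : R) : 0 < a -> a <= b -> v a <= v b.
Proof.
intros ha0 hab. apply (nondecreasing_of_deriv_nonneg v (Derive v)); [lra| |].
- intros x hx. apply is_derive_lap. lra.
- intros x hx. pose proof (pow_lt x (N-1) ltac:(lra)). pose proof (lap_flux_nonneg x ltac:(lra)).
  nra.
Qed.

(* Since v is nondecreasing, r^(N-1) u'(r) = int_0^r s^(N-1) v(s) ds <= v(r) r^N / N. *)
Lemma grad_le_lap (r : R) : 0 < r -> Derive u r <= r * v r / INR N.
Proof.
intros hr. destruct Hu as (_ & _ & _ & _ & Hgrad0 & _).
assert (hNp : 0 < INR N) by (apply lt_0_INR; lia).
set (k := v r / INR N).
set (F := fun s => s^(N-1) * Derive u s - k * s^N).
assert (HF : F r <= 0).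
{ apply (limit_ge_of_nonincreasing F 0 r hr).
  - intros s hs.
    apply (nonincreasing_of_deriv_nonpos F
      (fun x => x^(N-1) * v x - k * (INR N * 1 * x^Init.Nat.pred N))); [lra| |].
    + intros x hx. apply (is_derive_minus (fun t => t^(N-1) * Derive u t) (fun t => k * t^N)).
      * apply is_derive_grad_flux. lra.
      * apply is_derive_scal, (is_derive_pow (fun t => t) N x 1 (is_derive_id x)).
    + intros x hx. replace (Init.Nat.pred N) with (N-1)%nat by lia.
      pose proof (lap_nondecreasing x r ltac:(lra) ltac:(lra)).
      pose proof (pow_lt x (N-1) ltac:(lra)).
      replace (x^(N-1) * v x - k * (INR N * 1 * x^(N-1))) with (x^(N-1) * (v x - v r))
        by (unfold k; field; lra).
      nra.
  - assert (L : filterlim (fun s => s^(N-1) * Derive u s + - k * s^N) (at_right 0)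
                  (locally (0 * 0 + - k * 0))).
    { apply (filterlim_plus_fun (at_right 0)); apply (filterlim_mult_fun (at_right 0)).
      - apply filterlim_pow_0. lia.
      - exact Hgrad0.
      - apply filterlim_const.
      - apply filterlim_pow_0. lia. }
    replace (0 * 0 + - k * 0) with 0 in L by ring.
    apply (filterlim_ext (fun s => s^(N-1) * Derive u s + - k * s^N) F);
      [intros s; unfold F; ring | exact L]. }
unfold F in HF.
replace (r^N) with (r * r^(N-1)) in HF by (destruct N; [lia|]; simpl; rewrite Nat.sub_0_r; ring).
pose proof (pow_lt r (N-1) hr).
assert (Derive u r <= k * r) by nra.
unfold k in *. replace (r * v r / INR N) with (v r / INR N * r) by (field; lra). lra.
Qed.

(* If v(r0) > 0, then v and u' are eventually nonnegative: v >= v(r0) beyond r0,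
   so the gradient flux t^(N-1) u' grows at least linearly. *)
Lemma lap_pos_eventually_nonneg (r0 : R) : 0 < r0 -> 0 < v r0 ->
  exists Rs, 0 < Rs /\ forall t, Rs <= t -> 0 <= v t /\ 0 <= Derive u t.
Proof.
intros hr0 hv0.
set (G := fun t => t^(N-1) * Derive u t).
set (k := r0^(N-1) * v r0).
assert (hk : 0 < k) by (unfold k; pose proof (pow_lt r0 (N-1) hr0); nra).
assert (HG : forall t, r0 <= t -> G r0 + k * (t - r0) <= G t).
{ intros t ht.
  replace (k * (t - r0)) with (k * (t - r0)^1 / INR 1) by (simpl; field).
  apply (increment_ge_of_deriv_ge G (fun x => x^(N-1) * v x) k 0 r0 t ht).
  - intros x hx. apply is_derive_grad_flux. lra.
  - intros x hx. simpl. rewrite Rmult_1_r. unfold k.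
    pose proof (lap_nondecreasing r0 x hr0 (proj1 hx)).
    apply Rmult_le_compat; [apply pow_le; lra | lra | apply pow_incr; lra | lra]. }
assert (habs : 0 <= Rabs (G r0) / k) by (apply Rdiv_le_0_compat; [apply Rabs_pos | lra]).
exists (r0 + Rabs (G r0) / k + 1). split; [lra|].
intros t ht. split.
- pose proof (lap_nondecreasing r0 t hr0 ltac:(lra)). lra.
- assert (HGt : 0 < G t).
  { pose proof (HG t ltac:(lra)). pose proof (Rle_abs (- G r0)). rewrite Rabs_Ropp in *.
    assert (k * (Rabs (G r0) / k + 1) <= k * (t - r0)) by (apply Rmult_le_compat_l; lra).
    replace (k * (Rabs (G r0) / k + 1)) with (Rabs (G r0) + k) in * by (field; lra). lra. }
  unfold G in HGt. pose proof (pow_lt t (N-1) ltac:(lra)). nra.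
Qed.

Section QuarticGrowth.

(* Integrating the equation four
   times from s to t inside [T, 3T] then gives quartic growth of u, with a rate
   proportional to e^(u(s)). *)
Variables (Rs T m P W : R).
Hypothesis hRs : 0 < Rs.
Hypothesis hRsT : Rs <= T.
Hypothesis Hnonneg : forall t, Rs <= t -> 0 <= v t /\ 0 <= Derive u t.
Hypothesis hm : 0 < m.
Hypothesis hP : 0 < P.
Hypothesis Hweight : forall x, T <= x <= 3 * T -> P <= x^(N-1) <= W /\ m <= Rpower x alpha.

Lemma u_nondecreasing_beyond (a b : R) : Rs <= a -> a <= b -> u a <= u b.
Proof.
intros ha0 hab. apply (nondecreasing_of_deriv_nonneg u (Derive u)); [lra| |].
- intros x hx. apply is_derive_u. lra.
- intros x hx. apply Hnonneg. lra.
Qed.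

Lemma weight_upper_pos : 0 < W.
Proof. pose proof (Hweight T ltac:(lra)). lra. Qed.

(* First integration: F' >= P m e^(u(s)) on [s, t], and F(s) >= 0. *)
Lemma lap_flux_growth (s t : R) : T <= s -> s <= t -> t <= 3 * T ->
  m * P * exp (u s) * (t - s) <= t^(N-1) * Derive v t.
Proof.
intros hs hst ht.
pose proof (increment_ge_of_deriv_ge (fun x => x^(N-1) * Derive v x)
  (fun x => x^(N-1) * (Rpower x alpha * exp (u x))) (m * P * exp (u s)) 0 s t hst) as I.
assert (Hflux0 := lap_flux_nonneg s ltac:(lra)).
enough (s^(N-1) * Derive v s + m * P * exp (u s) * (t - s)^1 / INR 1 <= t^(N-1) * Derive v t)
  by (simpl in *; lra).
apply I.
- intros x hx. apply is_derive_lap_flux. lra.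
- intros x hx. simpl. rewrite Rmult_1_r.
  destruct (Hweight x ltac:(lra)) as [[hPx _] hmx].
  assert (exp (u s) <= exp (u x)) by (apply exp_le_compat, u_nondecreasing_beyond; lra).
  pose proof (exp_pos (u s)).
  replace (m * P * exp (u s)) with (P * (m * exp (u s))) by ring.
  apply Rmult_le_compat; [lra | nra | lra | apply Rmult_le_compat; lra].
Qed.

(* Second integration: v' = F / x^(N-1) >= F / W, and v(s) >= 0. *)
Lemma lap_growth (s t : R) : T <= s -> s <= t -> t <= 3 * T ->
  m * P * exp (u s) / W * (t - s)^2 / 2 <= v t.
Proof.
intros hs hst ht. pose proof weight_upper_pos as hW.
pose proof (increment_ge_of_deriv_ge v (Derive v) (m * P * exp (u s) / W) 1 s t hst) as I.
pose proof (proj1 (Hnonneg s ltac:(lra))) as Hv0.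
enough (v s + m * P * exp (u s) / W * (t - s)^2 / INR 2 <= v t)
  by (replace (INR 2) with 2 in * by (simpl; ring); lra).
apply I.
- intros x hx. apply is_derive_lap. lra.
- intros x hx. destruct (Hweight x ltac:(lra)) as [[hPx hxW] _].
  pose proof (exp_pos (u s)).
  replace (m * P * exp (u s) / W * (x - s)^1) with (m * P * exp (u s) * (x - s) / W)
    by (simpl; field; lra).
  apply (le_div_of_weighted _ _ (x^(N-1))); [apply pow_lt; lra | lra | |].
  + apply Rmult_le_pos; [|lra]. repeat apply Rmult_le_pos; lra.
  + apply lap_flux_growth; lra.
Qed.

(* Third integration: (x^(N-1) u')' = x^(N-1) v >= P v, and s^(N-1) u'(s) >= 0. *)
Lemma grad_flux_growth (s t : R) : T <= s -> s <= t -> t <= 3 * T ->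
  P * (m * P * exp (u s) / W / 2) * (t - s)^3 / 3 <= t^(N-1) * Derive u t.
Proof.
intros hs hst ht. pose proof weight_upper_pos as hW.
pose proof (increment_ge_of_deriv_ge (fun x => x^(N-1) * Derive u x) (fun x => x^(N-1) * v x)
  (P * (m * P * exp (u s) / W / 2)) 2 s t hst) as I.
assert (Hgrad0 : 0 <= s^(N-1) * Derive u s).
{ apply Rmult_le_pos; [apply pow_le; lra | apply Hnonneg; lra]. }
enough (s^(N-1) * Derive u s + P * (m * P * exp (u s) / W / 2) * (t - s)^3 / INR 3
        <= t^(N-1) * Derive u t)
  by (replace (INR 3) with 3 in * by (simpl; ring); lra).
apply I.
- intros x hx. apply is_derive_grad_flux. lra.
- intros x hx. destruct (Hweight x ltac:(lra)) as [[hPx _] _].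
  pose proof (lap_growth s x ltac:(lra) ltac:(lra) ltac:(lra)) as Hvx.
  assert (0 <= m * P * exp (u s) / W * (x - s)^2 / 2).
  { pose proof (exp_pos (u s)). pose proof (pow2_ge_0 (x - s)). unfold Rdiv.
    repeat apply Rmult_le_pos; try lra. left; apply Rinv_0_lt_compat; lra. }
  replace (P * (m * P * exp (u s) / W / 2) * (x - s)^2)
    with (P * (m * P * exp (u s) / W * (x - s)^2 / 2)) by (field; lra).
  apply Rmult_le_compat; lra.
Qed.

(* Fourth integration: u' >= (x^(N-1) u') / W. *)
Lemma u_quartic_growth (s t : R) : T <= s -> s <= t -> t <= 3 * T ->
  u s + m * P^2 / (24 * W^2) * exp (u s) * (t - s)^4 <= u t.
Proof.
intros hs hst ht. pose proof weight_upper_pos as hW.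
set (k := P * (m * P * exp (u s) / W / 2) / 3 / W).
pose proof (increment_ge_of_deriv_ge u (Derive u) k 3 s t hst) as I.
replace (m * P^2 / (24 * W^2) * exp (u s) * (t - s)^4) with (k * (t - s)^4 / INR 4)
  by (unfold k; simpl; field; lra).
apply I.
- intros x hx. apply is_derive_u. lra.
- intros x hx. destruct (Hweight x ltac:(lra)) as [[hPx hxW] _].
  replace (k * (x - s)^3) with (P * (m * P * exp (u s) / W / 2) * (x - s)^3 / 3 / W)
    by (unfold k; field; lra).
  apply (le_div_of_weighted _ _ (x^(N-1))); [apply pow_lt; lra | lra | |].
  + pose proof (exp_pos (u s)). assert (0 <= (x - s)^3) by (apply pow_le; lra).
    unfold Rdiv. repeat apply Rmult_le_pos; try lra;
      left; apply Rinv_0_lt_compat; lra.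
  + apply grad_flux_growth; lra.
Qed.

End QuarticGrowth.

Lemma u_quartic_growth_annulus (Rs T : R) : 0 < Rs -> Rs <= T ->
  (forall t, Rs <= t -> 0 <= v t /\ 0 <= Derive u t) ->
  forall s b, T <= s -> s <= b -> b <= 3 * T ->
  u s + Rpower T alpha * growth_const N alpha * exp (u s) * (b - s)^4 <= u b.
Proof.
intros hRs hRsT Hnonneg s b hs hsb hb.
assert (hT : 0 < T) by lra.
replace (Rpower T alpha * growth_const N alpha)
  with (Rpower T alpha * Rmin 1 (Rpower 3 alpha) * (T^(N-1))^2 / (24 * ((3 * T)^(N-1))^2)).
- apply (u_quartic_growth Rs T _ _ _ hRs hRsT Hnonneg); try lra.
  + apply Rmult_lt_0_compat; [apply exp_pos | apply Rmin_pos; [lra | apply exp_pos]].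
  + apply pow_lt. exact hT.
  + intros x hx. split; [split; apply pow_incr; lra | apply Rpower_lower_bound; lra].
- unfold growth_const. rewrite Rpow_mult_distr. field.
  split; apply pow_nonzero; lra.
Qed.

(* v <= 0 everywhere: otherwise u grows quartically with rate e^u beyond some
   radius Rs, and for T large the start condition of quartic_growth_blowup holds,
   contradicting the finiteness of u(3T). *)
Lemma lap_nonpos (r : R) : 0 < r -> v r <= 0.
Proof.
intros hr. apply Rnot_lt_le. intros hpos.
destruct (lap_pos_eventually_nonneg r hr hpos) as (Rs & hRs & Hnonneg).
pose proof (growth_const_pos N alpha) as hM. set (M := growth_const N alpha) in *.
set (X := 4 / (M * exp (u Rs))).
assert (hX : 0 < X) by (unfold X; pose proof (exp_pos (u Rs)); apply Rdiv_lt_0_compat; nra).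
set (T := Rmax Rs (Rpower X (/ (4 + alpha)))).
assert (hRsT : Rs <= T) by apply Rmax_l.
assert (hT : 0 < T) by lra.
apply (quartic_growth_blowup u (Rpower T alpha * M) T hT).
- apply Rmult_lt_0_compat; [apply exp_pos | exact hM].
- exact (u_quartic_growth_annulus Rs T hRs hRsT Hnonneg).
- assert (HTX : X <= Rpower T (4 + alpha)).
  { apply Rle_trans with (Rpower (Rpower X (/ (4 + alpha))) (4 + alpha)).
    - rewrite Rpower_mult. replace (/ (4 + alpha) * (4 + alpha)) with 1 by (field; lra).
      rewrite Rpower_1 by exact hX. lra.
    - apply Rle_Rpower_l; [lra | split; [apply exp_pos | apply Rmax_r]]. }
  assert (HuT : exp (u Rs) <= exp (u T)).
  { apply exp_le_compat, (u_nondecreasing_beyond Rs hRs Hnonneg); lra. }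
  assert (H4 : Rpower T 4 = T^4) by (rewrite <- Rpower_pow by exact hT; f_equal; simpl; ring).
  replace (Rpower T alpha * M * T^4 * exp (u T)) with (M * Rpower T (4 + alpha) * exp (u T))
    by (rewrite Rplus_comm, Rpower_plus, H4; ring).
  pose proof (exp_pos (u Rs)).
  apply Rle_trans with (M * X * exp (u Rs)).
  + unfold X. right. field. lra.
  + apply Rmult_le_compat; try lra; nra.
Qed.

(* From now on v <= 0, so u' <= r v / N <= 0. *)
Lemma u_nonincreasing (a b : R) : 0 < a -> a <= b -> u b <= u a.
Proof.
intros ha0 hab. apply (nonincreasing_of_deriv_nonpos u (Derive u)); [lra| |].
- intros x hx. apply is_derive_u. lra.
- intros x hx. pose proof (grad_le_lap x ltac:(lra)). pose proof (lap_nonpos x ltac:(lra)).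
  assert (hNp : 0 < INR N) by (apply lt_0_INR; lia).
  assert (x * v x / INR N <= 0); [|lra].
  unfold Rdiv. apply Rmult_le_0_r; [nra | left; apply Rinv_0_lt_compat; lra].
Qed.

(* Since u is nonincreasing, F(r) = int_0^r s^(N-1+alpha) e^(u(s)) ds
   >= e^(u(r)) r^(N+alpha) / (N+alpha). *)
Lemma lap_flux_lower (r : R) : 0 < r ->
  exp (u r) * Rpower r (INR N + alpha) / (INR N + alpha) <= r^(N-1) * Derive v r.
Proof.
intros hr. destruct Hu as (_ & _ & _ & _ & _ & _ & Hflux0).
assert (h3 : 3 <= INR N) by (replace 3 with (INR 3) by (simpl; ring); apply le_INR; lia).
set (y := INR N + alpha). assert (hy : 0 < y) by (unfold y; lra).
set (c := exp (u r) / y).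
set (F := fun s => s^(N-1) * Derive v s - c * Rpower s y).
assert (HF : 0 <= F r).
{ apply (limit_le_of_nondecreasing F 0 r hr).
  - intros s hs.
    apply (nondecreasing_of_deriv_nonneg F
      (fun x => x^(N-1) * (Rpower x alpha * exp (u x)) - c * (y * Rpower x (y - 1)))); [lra| |].
    + intros x hx.
      apply (is_derive_minus (fun t => t^(N-1) * Derive v t) (fun t => c * Rpower t y)).
      * apply is_derive_lap_flux. lra.
      * apply is_derive_scal, is_derive_Reals, derivable_pt_lim_power. lra.
    + intros x hx. unfold y. rewrite Rpower_split by (lia || lra). fold y. unfold c.
      replace (x^(N-1) * (Rpower x alpha * exp (u x))
               - exp (u r) / y * (y * (x^(N-1) * Rpower x alpha)))
        with (x^(N-1) * Rpower x alpha * (exp (u x) - exp (u r))) by (field; lra).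
      assert (exp (u r) <= exp (u x)) by (apply exp_le_compat, u_nonincreasing; lra).
      apply Rmult_le_pos; [apply Rmult_le_pos; [apply pow_le; lra | left; apply exp_pos] | lra].
  - assert (L : filterlim (fun s => s^(N-1) * Derive v s + - c * Rpower s y) (at_right 0)
                  (locally (0 + - c * 0))).
    { apply (filterlim_plus_fun (at_right 0)); [exact Hflux0|].
      apply (filterlim_mult_fun (at_right 0));
        [apply filterlim_const | apply filterlim_Rpower_0, hy]. }
    replace (0 + - c * 0) with 0 in L by ring.
    apply (filterlim_ext (fun s => s^(N-1) * Derive v s + - c * Rpower s y) F);
      [intros s; unfold F; ring | exact L]. }
unfold F, c in HF. unfold y in *. lra.
Qed.

(* Comparing v(r) with v(2r) <= 0, using v' >= F(r)/(2r)^(N-1) on [r, 2r]. *)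
Lemma lap_lower (r : R) : 0 < r -> r * (r^(N-1) * Derive v r) / (2 * r)^(N-1) <= - v r.
Proof.
intros hr. set (k := r^(N-1) * Derive v r / (2 * r)^(N-1)).
assert (Hinc : v r + k * (2 * r - r)^1 / INR 1 <= v (2 * r)).
{ apply (increment_ge_of_deriv_ge v (Derive v) k 0 r (2 * r)); [lra| |].
  - intros x hx. apply is_derive_lap. lra.
  - intros x hx. simpl. rewrite Rmult_1_r. unfold k.
    apply (le_div_of_weighted _ _ (x^(N-1))); [apply pow_lt; lra | apply pow_incr; lra | |].
    + apply lap_flux_nonneg. exact hr.
    + apply lap_flux_nondecreasing; lra. }
pose proof (lap_nonpos (2 * r) ltac:(lra)).
replace (r * (r^(N-1) * Derive v r) / (2 * r)^(N-1)) with (k * r)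
  by (unfold k; field; apply pow_nonzero; lra).
simpl in Hinc. lra.
Qed.

Lemma grad_upper (r : R) : 0 < r ->
  Derive u r <= - ((4 + alpha) * decay_const N alpha * exp (u r) * Rpower r (3 + alpha)).
Proof.
intros hr.
assert (h3 : 3 <= INR N) by (replace 3 with (INR 3) by (simpl; ring); apply le_INR; lia).
pose proof (pow_lt r (N-1) hr). pose proof (pow_lt 2 (N-1) ltac:(lra)).
pose proof (pow_lt (2 * r) (N-1) ltac:(lra)).
set (B := r * (exp (u r) * Rpower r (INR N + alpha) / (INR N + alpha)) / (2 * r)^(N-1)).
assert (HB : B <= - v r).
{ apply Rle_trans with (r * (r^(N-1) * Derive v r) / (2 * r)^(N-1)); [|apply lap_lower, hr].
  unfold B, Rdiv. apply Rmult_le_compat_r; [left; apply Rinv_0_lt_compat; lra|].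
  apply Rmult_le_compat_l; [lra|]. apply lap_flux_lower, hr. }
assert (HBeq : r * B / INR N
               = (4 + alpha) * decay_const N alpha * exp (u r) * Rpower r (3 + alpha)).
{ unfold B, decay_const. rewrite Rpow_mult_distr.
  replace (Rpower r (INR N + alpha)) with (Rpower r (3 + alpha) * r^(N-1) / r^2)
    by (rewrite <- Rpower_shift by (lia || lra); field; lra).
  field. repeat split; lra. }
rewrite <- HBeq.
apply Rle_trans with (r * v r / INR N); [apply grad_le_lap, hr|].
assert (r * v r <= - (r * B)) by nra.
unfold Rdiv. replace (- (r * B * / INR N)) with (- (r * B) * / INR N) by ring.
apply Rmult_le_compat_r; [left; apply Rinv_0_lt_compat|]; lra.
Qed.

(* The potential e^(-u(s)) - K s^(4+alpha) is nondecreasing, since its derivative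
   -u' e^(-u) - (4+alpha) K s^(3+alpha) is nonnegative by grad_upper. *)
Lemma decay_potential_nondecreasing (a b : R) : 0 < a -> a <= b ->
  exp (- u a) - decay_const N alpha * Rpower a (4 + alpha)
  <= exp (- u b) - decay_const N alpha * Rpower b (4 + alpha).
Proof.
intros ha0 hab. set (c := decay_const N alpha).
apply (nondecreasing_of_deriv_nonneg (fun s => exp (- u s) - c * Rpower s (4 + alpha))
  (fun x => - Derive u x * exp (- u x) - c * ((4 + alpha) * Rpower x (4 + alpha - 1)))); [lra| |].
- intros x hx. apply (is_derive_minus (fun t => exp (- u t)) (fun t => c * Rpower t (4 + alpha))).
  + eapply is_derive_value_eq; [|simpl; reflexivity].
    apply (is_derive_comp exp (fun t => - u t)); [apply is_derive_exp|].
    apply (is_derive_opp u), is_derive_u. lra.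
  + apply is_derive_scal, is_derive_Reals, derivable_pt_lim_power. lra.
- intros x hx. replace (4 + alpha - 1) with (3 + alpha) by ring.
  pose proof (grad_upper x ltac:(lra)) as Hgrad. fold c in Hgrad.
  pose proof (exp_pos (- u x)).
  assert (E : exp (u x) * exp (- u x) = 1).
  { rewrite <- exp_plus. replace (u x + - u x) with 0 by ring. apply exp_0. }
  assert (Hmul : (4 + alpha) * c * exp (u x) * Rpower x (3 + alpha) * exp (- u x)
                 <= - Derive u x * exp (- u x)) by (apply Rmult_le_compat_r; lra).
  replace ((4 + alpha) * c * exp (u x) * Rpower x (3 + alpha) * exp (- u x))
    with ((4 + alpha) * c * Rpower x (3 + alpha) * (exp (u x) * exp (- u x))) in Hmul by ring.
  rewrite E in Hmul. lra.
Qed.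

(* Since u(0+) = 0 the potential tends to 1 at 0+, so e^(-u(r)) >= 1 + K r^(4+alpha),
   i.e. u(r) <= -(4+alpha) ln r - ln K. *)
Lemma u_decay (r : R) : 0 < r -> u r <= - (4 + alpha) * ln r - ln (decay_const N alpha).
Proof.
intros hr. destruct Hu as (_ & _ & _ & Hu0 & _).
pose proof (decay_const_pos N alpha hN ha) as hc. set (c := decay_const N alpha) in *.
set (F := fun s => exp (- u s) - c * Rpower s (4 + alpha)).
assert (HF : 1 <= F r).
{ apply (limit_le_of_nondecreasing F 1 r hr).
  - intros s hs. apply decay_potential_nondecreasing; lra.
  - assert (L : filterlim (fun s => exp (- u s) + - c * Rpower s (4 + alpha)) (at_right 0)
                  (locally (exp (- 0) + - c * 0))).
    { apply (filterlim_plus_fun (at_right 0)).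
      - eapply filterlim_comp; [eapply filterlim_comp; [exact Hu0 | exact (filterlim_opp 0)]|].
        apply continuous_exp.
      - apply (filterlim_mult_fun (at_right 0)); [apply filterlim_const |].
        apply filterlim_Rpower_0. lra. }
    replace (exp (- 0) + - c * 0) with 1 in L by (rewrite Ropp_0, exp_0; ring).
    apply (filterlim_ext (fun s => exp (- u s) + - c * Rpower s (4 + alpha)) F);
      [intros s; unfold F; ring | exact L]. }
unfold F in HF.
assert (hpos : 0 < c * Rpower r (4 + alpha)) by (apply Rmult_lt_0_compat; [lra | apply exp_pos]).
assert (Hln : ln (c * Rpower r (4 + alpha)) <= ln (exp (- u r))) by (apply ln_le_compat; lra).
rewrite ln_exp, ln_mult, ln_Rpower in Hln by (lra || apply exp_pos). lra.
Qed.

End EntireSolution.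

Theorem lemma3p3 (N : nat) (alpha : R) :
  (3 <= N)%nat -> -2 < alpha ->
  exists C : R, 0 < C /\
    forall (beta : R) (u : R -> R),
      Rbar_le (Finite beta) (beta0 N alpha) ->
      entire_radial_solution N alpha beta u ->
      forall r : R, 0 < r -> u r <= - (4 + alpha) * ln r + C.
Proof.
intros hN ha.
exists (Rmax 1 (- ln (decay_const N alpha))). split.
- pose proof (Rmax_l 1 (- ln (decay_const N alpha))). lra.
- intros beta u _ Hu r hr.
  pose proof (u_decay N alpha beta u hN ha Hu r hr).
  pose proof (Rmax_r 1 (- ln (decay_const N alpha))). lra.
Qed.
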